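(* Let $n\ge 2$ and $\beta\in B_n$. Let $\hat\beta_n$ be the $(n-1)\times(n-1)$ matrix obtained from $\psi_n(\beta)$ by deleting its $n$-th row and $n$-th column. Then in $\Lambda=\mathbb{Z}[t^{\pm1}]$, $$(t^{-n}-1)\det(\hat\beta_n-I_{n-1})=(t^{-1}-1)\det(\psi_n^r(\beta)-I_{n-1}).$$
   Context: $\psi_n\colon B_n\to\mathrm{GL}_n(\Lambda)$ is the unreduced Burau representation: $\psi_n(\sigma_i)=I_{i-1}\oplus U\oplus I_{n-i-1}$ with $U=\left(\begin{smallmatrix}1-t&t\\1&0\end{smallmatrix}\right)$. Let $C_n=\sum_{1\le i\le j\le n}E_{i,j}$ be the upper triangular $n\times n$ matrix with all entries on and above the diagonal equal to $1$. For every $\beta\in B_n$ one has $C_n^{-1}\psi_n(\beta)C_n=\left(\begin{smallmatrix}\psi_n^r(\beta)&0_{n-1}\\ *_\beta&1\end{smallmatrix}\right)$ with $0_{n-1}$ a zero column, $*_\beta$ a row of length $n-1$, and $\psi_n^r(\beta)\in\mathrm{GL}_{n-1}(\Lambda)$; the map $\psi_n^r$ is the reduced Burau representation. $I_k$ is the $k\times k$ identity matrix. *)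

From HB Require Import structures.
From mathcomp Require Import all_boot all_order all_algebra.
Set Implicit Arguments. Unset Strict Implicit. Unset Printing Implicit Defensive.
Import GRing.Theory.
Local Open Scope ring_scope.

(* Burau representation over an arbitrary commutative ring R with a unit t.
   Lambda = Z[t^{+-1}] is the universal such ring. *)

(* psi_n(sigma_{i+1}) = I_i (+) U (+) I_{n-i-2}, with U = [[1-t, t],[1, 0]];
   indices are 0-based: the generator sigma_{i+1} acts on rows/cols i, i+1. *)
Definition burau_gen (R : comUnitRingType) (t : R) (n i : nat) : 'M[R]_n :=
  \matrix_(j, k)
    if (j == i :> nat) && (k == i :> nat) then 1 - t
    else if (j == i :> nat) && (k == i.+1 :> nat) then t
    else if (j == i.+1 :> nat) && (k == i :> nat) then 1
    else if (j == i.+1 :> nat) && (k == i.+1 :> nat) then 0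
    else (j == k)%:R.

(* A braid in B_n is given by a word in the Artin generators sigma_1..sigma_{n-1}:
   a letter (i, true) is sigma_{i+1}, (i, false) is sigma_{i+1}^{-1}. *)
Definition braid_word (n : nat) := seq ('I_n.-1 * bool).

Definition burau (R : comUnitRingType) (t : R) (n : nat) (w : braid_word n)
  : 'M[R]_n :=
  foldr (fun (l : 'I_n.-1 * bool) M => (if l.2 then burau_gen t n l.1
                     else invmx (burau_gen t n l.1)) *m M) 1%:M w.

Definition Cmx (R : comUnitRingType) (n : nat) : 'M[R]_n :=
  \matrix_(i, j) ((i <= j)%N)%:R.

Definition upleft (R : Type) (n : nat) (M : 'M[R]_n) : 'M[R]_(n.-1) :=
  \matrix_(i, j) M (widen_ord (leq_pred n) i) (widen_ord (leq_pred n) j).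

Definition burau_red (R : comUnitRingType) (t : R) (n : nat) (w : braid_word n)
  : 'M[R]_(n.-1) :=
  upleft (invmx (Cmx R n) *m burau t w *m Cmx R n).

From HB Require Import structures.
From mathcomp Require Import all_boot all_order all_algebra.
Set Implicit Arguments. Unset Strict Implicit. Unset Printing Implicit Defensive.
Import GRing.Theory.
Local Open Scope ring_scope.

(* Put n = m + 1, B = psi_n(beta) and A = B - I_n.
   1. The row vector v = (1, t, ..., t^m) is fixed by every Burau generator
      and its inverse, hence v A = 0; since t is a unit this expresses the
      last row of A through its upper-left block:  lastr A = - w * upleft A
      with w = (t^k / t^m)_k.
   2. Write A = C Z with C = C_n.  Because the last row of C is e_n, the
      block formula for upleft of a product gives
        upleft A = upleft C * upleft Z + u * lastr A     (u = all-ones column)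
      so (I + u w) upleft A = upleft C * upleft Z, while
      det upleft (Z C) = det upleft Z since upleft C = C_(n-1) is unimodular.
   3. The matrix determinant lemma det (I + u w) = 1 + w u turns this into
      (1 + sum_k t^k / t^m) det (upleft A) = det (psi^r_n(beta) - I), and the
      geometric sum identity t^-n - 1 = (t^-1 - 1)(1 + sum_k t^k / t^m)
      finishes the proof. *)

Section BlockCalculus.
Variable R : pzRingType.
Variable m : nat.
Local Notation wd := (widen_ord (leqnSn m)).

Lemma upleftE (M : 'M[R]_m.+1) : upleft M = \matrix_(i, j) M (wd i) (wd j).
Proof. by apply/matrixP => i j; rewrite !mxE; congr (M _ _); apply: val_inj. Qed.

Definition lastc (M : 'M[R]_m.+1) : 'cV[R]_m := \col_i M (wd i) ord_max.
Definition lastr (M : 'M[R]_m.+1) : 'rV[R]_m := \row_j M ord_max (wd j).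

Lemma upleft_mul (X Y : 'M[R]_m.+1) :
  upleft (X *m Y) = upleft X *m upleft Y + lastc X *m lastr Y.
Proof.
rewrite !upleftE; apply/matrixP => i j; rewrite !mxE big_ord_recr /=.
congr (_ + _); first by apply: eq_bigr => k _; rewrite !mxE.
by rewrite big_ord1 !mxE.
Qed.

Lemma upleftB1 (X : 'M[R]_m.+1) : upleft (X - 1%:M) = upleft X - 1%:M.
Proof. by rewrite !upleftE; apply/matrixP => i j; rewrite !mxE. Qed.

End BlockCalculus.

(* Matrix determinant lemma for rank-one perturbations of the identity,
   proved by comparing two block factorisations of [[I, u], [-w, 1]]. *)
Lemma det1_rank1 (R : comPzRingType) (m : nat) (u : 'cV[R]_m) (w : 'rV[R]_m) :
  \det (1%:M + u *m w) = 1 + (w *m u) 0 0.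
Proof.
pose M := block_mx (1%:M : 'M_m) u (- w) (1%:M : 'M_1).
have lowerM : block_mx 1%:M 0 w 1%:M *m M = block_mx 1%:M u 0 (1%:M + w *m u).
  by rewrite mulmx_block !mul1mx !mul0mx !addr0 mulmx1 addrN addrC.
have upperM : M = block_mx (1%:M + u *m w) u 0 1%:M *m block_mx 1%:M 0 (- w) 1%:M.
  by rewrite mulmx_block !mulmx1 !mulmx0 ?mul0mx !mul1mx ?add0r ?addr0 mulmxN addrK.
have := congr1 determinant lowerM.
rewrite det_mulmx det_lblock det_ublock !det1 !mul1r.
rewrite upperM det_mulmx det_lblock det_ublock !det1 !mulr1 => ->.
by rewrite det_mx11 !mxE.
Qed.

Section Cmatrix.
Variable R : comUnitRingType.
Variable m : nat.
Local Notation C := (Cmx R m.+1).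

(* C_n is unitriangular. *)
Lemma det_Cmx (k : nat) : \det (Cmx R k) = 1.
Proof.
rewrite -det_tr det_trig; last first.
  by apply/is_trig_mxP => i j lt; rewrite !mxE leqNgt lt.
by rewrite big1 // => i _; rewrite !mxE leqnn.
Qed.

Lemma Cmx_unit : C \in unitmx.
Proof. by rewrite unitmxE det_Cmx unitr1. Qed.

Lemma upleft_Cmx : upleft C = Cmx R m.
Proof. by apply/matrixP => i j; rewrite upleftE !mxE. Qed.

Lemma lastr_Cmx : lastr C = 0.
Proof. by apply/rowP => j; rewrite !mxE /= leqNgt ltn_ord. Qed.

Lemma lastc_Cmx : lastc C = const_mx 1.
Proof. by apply/colP => i; rewrite !mxE /= ltnW. Qed.

Lemma lastr_Cmx_mul (Z : 'M[R]_m.+1) : lastr (C *m Z) = lastr Z.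
Proof.
apply/rowP => j; rewrite !mxE big_ord_recr /= !mxE leqnn mul1r big1 ?add0r //.
by move=> k _; rewrite !mxE /= leqNgt ltn_ord mul0r.
Qed.

Lemma det_upleft_mulC (Z : 'M[R]_m.+1) : \det (upleft (Z *m C)) = \det (upleft Z).
Proof. by rewrite upleft_mul lastr_Cmx mulmx0 addr0 det_mulmx upleft_Cmx det_Cmx mulr1. Qed.

Lemma det_upleft_conjC (A : 'M[R]_m.+1) (w : 'rV[R]_m) :
  lastr A = - (w *m upleft A) ->
  (1 + \sum_k w 0 k) * \det (upleft A) = \det (upleft (invmx C *m A *m C)).
Proof.
move=> lastrA; pose Z := invmx C *m A.
have CZ : C *m Z = A by rewrite mulKVmx // Cmx_unit.
have upA : upleft A = upleft C *m upleft Z + lastc C *m lastr A.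
  by rewrite -{2}CZ lastr_Cmx_mul -upleft_mul CZ.
have factor : (1%:M + lastc C *m w) *m upleft A = upleft C *m upleft Z.
  by rewrite mulmxDl mul1mx {1}upA lastrA mulmxN mulmxA subrK.
have detZ : \det (upleft Z) = \det (upleft C *m upleft Z).
  by rewrite det_mulmx upleft_Cmx det_Cmx mul1r.
rewrite det_upleft_mulC detZ -factor det_mulmx det1_rank1 lastc_Cmx mxE.
by congr ((1 + _) * _); apply: eq_bigr => k _; rewrite mxE mulr1.
Qed.

End Cmatrix.

Section BurauFixedVector.
Variable R : comUnitRingType.
Variable t : R.
Variable n : nat.

Definition tpow_row : 'rV[R]_n := \row_k t ^+ k.

(* The generator sigma_(i+1) fixes it: its block U maps (t^i, t^(i+1)) to
   (t^i (1-t) + t^(i+1), t^(i+1)). *)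
Lemma tpow_row_gen (i : nat) : (i.+1 < n)%N -> tpow_row *m burau_gen t n i = tpow_row.
Proof.
move=> lt; have lt0 : (i < n)%N by apply: ltnW.
pose i0 := Ordinal lt0; pose i1 := Ordinal lt.
apply/rowP => k; rewrite !mxE.
rewrite (bigD1 i0) // (bigD1 i1) /=; last by rewrite -val_eqE /= neq_ltn ltnSn orbT.
rewrite !mxE /= eqSS (gtn_eqF (ltnSn i)) (ltn_eqF (ltnSn i)) eqxx /=.
have off_block : \sum_(j | (j != i0) && (j != i1)) tpow_row 0 j * burau_gen t n i j k
    = if (k != i0) && (k != i1) then t ^+ k else 0.
  rewrite (eq_bigr (fun j : 'I_n => t ^+ j * (j == k)%:R)); last first.
    by move=> j /andP[]; rewrite -!val_eqE /= !mxE => /negbTE-> /negbTE->.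
  case: ifP => Pk; last first.
    by rewrite big1 // => j Pj; case: eqP => [ejk|]; [rewrite ejk Pk in Pj|rewrite mulr0].
  rewrite (bigD1 k) //= eqxx mulr1 big1 ?addr0 // => j /andP[_ /negbTE->].
  by rewrite mulr0.
rewrite off_block -!val_eqE /=.
have [->|nki] := eqVneq (k : nat) i.
  by rewrite /= mulr1 addr0 exprS mulrBr mulr1 [t * _]mulrC subrK.
have [->|nki1] := eqVneq (k : nat) i.+1.
  by rewrite /= mulr0 !addr0 exprS mulrC.
by rewrite /= !mulr0 !add0r.
Qed.

(* Hence it is fixed by every braid (for inverse letters: if the generator is
   invertible, cancel it; otherwise invmx returns it unchanged). *)
Lemma tpow_row_burau (w : braid_word n) : tpow_row *m burau t w = tpow_row.
Proof.
elim: w => [|l w IH] /=; first by rewrite mulmx1.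
have lt : (l.1.+1 < n)%N by rewrite -ltn_predRL ltn_ord.
have fixG := tpow_row_gen lt.
rewrite mulmxA; case: (l.2); first by rewrite fixG IH.
have [uG|nuG] := boolP (burau_gen t n l.1 \in unitmx).
  by rewrite -{1}fixG mulmxK // IH.
by rewrite invmx_out ?inE // fixG IH.
Qed.

End BurauFixedVector.

(* Coefficients of the last row of a matrix killed by (1, t, ..., t^m). *)
Definition tpow_ratio (R : comUnitRingType) (t : R) (m : nat) : 'rV[R]_m :=
  \row_k (t ^+ k / t ^+ m).

Lemma lastr_tpow_kernel (R : comUnitRingType) (t : R) (m : nat) (A : 'M[R]_m.+1) :
  t \is a GRing.unit -> tpow_row t m.+1 *m A = 0 ->
  lastr A = - (tpow_ratio t m *m upleft A).
Proof.
move=> ut vA; have utm : t ^+ m \is a GRing.unit by rewrite unitrX.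
apply/rowP => j.
have := congr1 (fun M : 'M[R]_(1, m.+1) => M 0 (widen_ord (leqnSn m) j)) vA.
rewrite /= !mxE big_ord_recr /= !mxE => /eqP; rewrite addrC addr_eq0 => /eqP lastE.
rewrite -(mulKr utm (A _ _)) lastE mulrN mulr_sumr; congr (- _).
by apply: eq_bigr => k _; rewrite upleftE !mxE mulrCA mulrA.
Qed.

Lemma tinv_pow_sub1 (R : comUnitRingType) (t : R) (m : nat) : t \is a GRing.unit ->
  t ^- m.+1 - 1 = (t^-1 - 1) * (1 + \sum_k tpow_ratio t m 0 k).
Proof.
move=> ut; have utm : t ^+ m \is a GRing.unit by rewrite unitrX.
have utm1 : t ^+ m.+1 \is a GRing.unit by rewrite unitrX.
apply: (mulrI utm1); rewrite mulrBr divrr // mulr1.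
rewrite exprSr -mulrA (mulrA t) mulrBr mulr1 mulrV // mulrCA.
rewrite mulrDr mulr1 mulr_sumr.
rewrite (eq_bigr (fun k : 'I_m => t ^+ k)); last first.
  by move=> k _; rewrite mxE mulrCA divrr // mulr1.
rewrite -[t ^+ m + _]addrC -(big_ord_recr m (fun k => t ^+ k)) /=.
by rewrite -exprSr -opprB subrX1 -mulNr opprB.
Qed.

Theorem lemma2 (R : comUnitRingType) (t : R) (n : nat) (w : braid_word n) :
  t \is a GRing.unit -> (2 <= n)%N ->
  (t ^- n - 1) * \det (upleft (burau t w) - 1%:M)
  = (t^-1 - 1) * \det (burau_red t w - 1%:M).
Proof.
move=> ut; case: n w => [|m] w // _.
set A := burau t w - 1%:M.
have vA : tpow_row t m.+1 *m A = 0 by rewrite mulmxBr mulmx1 tpow_row_burau subrr.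
have redE : burau_red t w - 1%:M = upleft (invmx (Cmx R m.+1) *m A *m Cmx R m.+1).
  by rewrite /burau_red -upleftB1 mulmxBr mulmx1 mulmxBl mulVmx // Cmx_unit.
rewrite -upleftB1 redE -(det_upleft_conjC (lastr_tpow_kernel ut vA)).
by rewrite tinv_pow_sub1 // mulrA.
Qed.
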